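(* In the setting described in the context, let $q\in\{1,\dots,n\}$ and assume there exists $A'\subseteq\mathcal C$ with $|A'|=n-q$ and $f(A')=0$. Define $\mu_\wedge:2^{\mathcal C}\to L$ by $\mu_\wedge(\mathcal C)=1$, $\mu_\wedge(X)=f(X)$ if $n-q\le|X|<n$, and $\mu_\wedge(X)=\min_{Y\supsetneq X,\ n-q\le|Y|<n}f(Y)$ if $|X|<n-q$. Then $\mu_\wedge$ is a $q$-minitive capacity on $\mathcal C$.
   Context: Let $\mathcal C=\{1,\dots,n\}$ and let $L$ be either a finite totally ordered set $0=\xi_1<\dots<\xi_l=1$ or $L=[0,1]$. Training data: $N$ pairs $(x^{(k)},\alpha^{(k)})$ with $x^{(k)}\in L^n$, $\alpha^{(k)}\in L$. For $B\subsetneq\mathcal C$, $\gamma_{k,B}=\max_{i\in\mathcal C\setminus B}x^{(k)}_i$ and $f(B)=\max_{1\le k\le N}(\gamma_{k,B}\,\epsilon\,\alpha^{(k)})$ where $a\,\epsilon\,b=b$ if $a<b$ and $a\,\epsilon\,b=0$ if $a\ge b$. A capacity is a map $\mu:2^{\mathcal C}\to L$ with $\mu(\emptyset)=0$, $\mu(\mathcal C)=1$, monotone for inclusion; it is $q$-minitive if for all $X$ with $|X|<n-q$, $\mu(X)=\min_{Y\supsetneq X,\ |Y|\ge n-q}\mu(Y)$. *)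

From HB Require Import structures.
From mathcomp Require Import all_boot all_order all_algebra.
From mathcomp Require Import reals.
Set Implicit Arguments. Unset Strict Implicit. Unset Printing Implicit Defensive.
Import Order.TTheory GRing.Theory Num.Theory.
Local Open Scope ring_scope.

Section Defs.
Variable R : realType.

(* The scale L: either the whole unit interval [0,1], or a finite
   set of reals in [0,1] containing 0 and 1 (a finite chain 0=xi_1<...<xi_l=1). *)
Definition admissible_scale (L : pred R) : Prop :=
  (forall t, L t = (0 <= t <= 1)) \/
  [/\ exists s : seq R, forall t, L t = (t \in s),
      forall t, L t -> 0 <= t <= 1, L 0 & L 1].

Definition eps (a b : R) : R := if a < b then b else 0.

Definition gammaB (n N : nat) (x : 'I_N -> 'I_n -> R) (k : 'I_N)
  (B : {set 'I_n}) : R := \big[Num.max/0]_(i in ~: B) x k i.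

Definition fB (n N : nat) (x : 'I_N -> 'I_n -> R) (alpha : 'I_N -> R)
  (B : {set 'I_n}) : R :=
  \big[Num.max/0]_(k < N) eps (gammaB x k B) (alpha k).

Definition mu_wedge (n N q : nat) (x : 'I_N -> 'I_n -> R) (alpha : 'I_N -> R)
  (X : {set 'I_n}) : R :=
  if X == setT then 1
  else if (n - q <= #|X|)%N then fB x alpha X
  else \big[Num.min/1]_(Y : {set 'I_n} |
          [&& X \proper Y, (n - q <= #|Y|)%N & (#|Y| < n)%N]) fB x alpha Y.

Definition capacity (n : nat) (L : pred R) (mu : {set 'I_n} -> R) : Prop :=
  [/\ forall X, L (mu X), mu set0 = 0, mu setT = 1 &
      forall X Y : {set 'I_n}, X \subset Y -> mu X <= mu Y].

Definition q_minitive (n q : nat) (mu : {set 'I_n} -> R) : Prop :=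
  forall X : {set 'I_n}, (#|X| < n - q)%N ->
    mu X = \big[Num.min/1]_(Y : {set 'I_n} |
              [&& X \proper Y & (n - q <= #|Y|)%N]) mu Y.
End Defs.

From HB Require Import structures.
From mathcomp Require Import all_boot all_order all_algebra.
From mathcomp Require Import reals.
Set Implicit Arguments. Unset Strict Implicit. Unset Printing Implicit Defensive.
Import Order.TTheory GRing.Theory Num.Theory.
Local Open Scope ring_scope.

(* Since [gammaB] is antitone in [B] and [eps] is antitone in its first
   argument (for [alpha >= 0]), [f] is monotone, takes values in [L] and is
   bounded by 1.  Hence [mu_wedge] is a monotone [L]-valued set function, and
   [mu_wedge set0 = 0] because the set [A'] of the hypothesis is either empty
   or one of the sets over which the minimum defining [mu_wedge set0] ranges
   (it is not the full set as [q >= 1]).  For q-minitivity, the minimum over the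
   strict supersets of size at least [n - q] contains the full set, whose
   value 1 is the neutral element of that minimum; the other sets there have
   [mu_wedge Y = f Y]. *)

Lemma card_ltn_ord n (A : {set 'I_n}) : (#|A| < n)%N = (A != setT).
Proof. by rewrite -properT properEcard subsetT cardsT card_ord. Qed.

Lemma pred_max d (T : orderType d) (P : pred T) (a b : T) :
  P a -> P b -> P (Order.max a b).
Proof. by rewrite /Order.max; case: ifP. Qed.

Lemma pred_min d (T : orderType d) (P : pred T) (a b : T) :
  P a -> P b -> P (Order.min a b).
Proof. by rewrite /Order.min; case: ifP. Qed.

Lemma admissible_scale01 (R : realType) (L : pred R) : admissible_scale L ->
  [/\ L 0, L 1 & forall t, L t -> 0 <= t <= 1].
Proof.
case=> [HL|[] //].
by split=> [||t]; rewrite HL ?lexx ?ler01.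
Qed.

Section FB.
Variables (R : realType) (n N : nat) (x : 'I_N -> 'I_n -> R) (alpha : 'I_N -> R).

Lemma gammaB_antitone k (X Y : {set 'I_n}) :
  X \subset Y -> gammaB x k Y <= gammaB x k X.
Proof.
move=> sXY; apply: sub_bigmax => i; rewrite !inE.
by apply: contra => /(subsetP sXY).
Qed.

Lemma fB_ge0 (X : {set 'I_n}) : 0 <= fB x alpha X.
Proof. exact: bigmax_ge_id. Qed.

Lemma fB_in_scale (L : pred R) (X : {set 'I_n}) :
  L 0 -> (forall k, L (alpha k)) -> L (fB x alpha X).
Proof.
move=> L0 La; apply: (big_ind L) => // [a b|k _]; first exact: pred_max.
by rewrite /eps; case: ifP.
Qed.

Hypotheses (alpha_ge0 : forall k, 0 <= alpha k) (alpha_le1 : forall k, alpha k <= 1).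

Lemma fB_le1 (X : {set 'I_n}) : fB x alpha X <= 1.
Proof. by apply: bigmax_le => // k _; rewrite /eps; case: ifP. Qed.

Lemma fB_monotone (X Y : {set 'I_n}) :
  X \subset Y -> fB x alpha X <= fB x alpha Y.
Proof.
move=> sXY; apply: le_bigmax2 => k _; rewrite /eps.
have [gXa|_] := ltP (gammaB x k X) (alpha k).
  by rewrite (le_lt_trans (gammaB_antitone k sXY) gXa).
by case: ifP.
Qed.

End FB.

Section MuWedge.
Variables (R : realType) (n N q : nat) (x : 'I_N -> 'I_n -> R) (alpha : 'I_N -> R).

Local Notation f := (fB x alpha).
Local Notation mu := (mu_wedge q x alpha).

Lemma mu_wedgeT : mu setT = 1.
Proof. by rewrite /mu_wedge eqxx. Qed.

Lemma mu_wedge_large (X : {set 'I_n}) :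
  X != setT -> (n - q <= #|X|)%N -> mu X = f X.
Proof. by move=> /negPf XT cX; rewrite /mu_wedge XT cX. Qed.

Lemma mu_wedge_small (X : {set 'I_n}) : (#|X| < n - q)%N ->
  mu X = \big[Num.min/1]_(Y : {set 'I_n} |
           [&& X \proper Y, (n - q <= #|Y|)%N & (#|Y| < n)%N]) f Y.
Proof.
move=> cX; have XT : X != setT.
  by rewrite -card_ltn_ord (leq_trans cX) ?leq_subr.
by rewrite /mu_wedge (negPf XT) leqNgt cX.
Qed.

Lemma mu_wedge_in_scale (L : pred R) (X : {set 'I_n}) :
  L 0 -> L 1 -> (forall k, L (alpha k)) -> L (mu X).
Proof.
move=> L0 L1 La; rewrite /mu_wedge; case: ifP => // _.
case: ifP => _; first exact: fB_in_scale.
apply: (big_ind L) => // [a b|Y _]; [exact: pred_min | exact: fB_in_scale].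
Qed.

Lemma mu_wedge0 (A : {set 'I_n}) :
  (0 < q <= n)%N -> #|A| = (n - q)%N -> f A = 0 -> mu set0 = 0.
Proof.
case/andP=> q_gt0 qn cA fA0.
have cA_lt : (#|A| < n)%N by rewrite cA ltn_subrL q_gt0 (leq_trans q_gt0 qn).
have AT : A != setT by rewrite -card_ltn_ord.
have [nq0|nq_gt0] := posnP (n - q).
  have A0 : A = set0 by apply/eqP; rewrite -cards_eq0 cA nq0.
  by rewrite -A0 mu_wedge_large // cA nq0.
rewrite mu_wedge_small ?cards0 //; apply/eqP; rewrite eq_le; apply/andP; split.
  by rewrite -fA0 bigmin_le_cond // proper0 -card_gt0 cA_lt cA nq_gt0 leqnn.
by apply/bigmin_geP; split=> // Y _; apply: fB_ge0.
Qed.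

Lemma mu_wedge_minitive : q_minitive q mu.
Proof.
move=> X cX; have XT : X \proper setT.
  by rewrite properT -card_ltn_ord (leq_trans cX) ?leq_subr.
rewrite (bigD1 setT); last by rewrite XT cardsT card_ord leq_subr.
rewrite /= mu_wedgeT mu_wedge_small // minC min_l ?bigmin_le_id //.
apply: eq_big => [Y|Y /and3P[_ cY]]; first by rewrite card_ltn_ord andbA.
by rewrite card_ltn_ord => YT; rewrite mu_wedge_large.
Qed.

Hypotheses (alpha_ge0 : forall k, 0 <= alpha k) (alpha_le1 : forall k, alpha k <= 1).

Lemma mu_wedge_le1 (X : {set 'I_n}) : mu X <= 1.
Proof.
rewrite /mu_wedge; case: ifP => // _.
by case: ifP => _; [exact: fB_le1 | exact: bigmin_le_id].
Qed.

Lemma mu_wedge_monotone (X Y : {set 'I_n}) : X \subset Y -> mu X <= mu Y.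
Proof.
move=> sXY; have [->|YT] := eqVneq Y setT; first by rewrite mu_wedgeT mu_wedge_le1.
have XT : X != setT by apply: contraNneq YT => XT; rewrite -subTset -XT.
have [cX|cX] := leqP (n - q) #|X|.
  rewrite !mu_wedge_large ?(leq_trans cX (subset_leq_card sXY)) //.
  exact: fB_monotone.
rewrite mu_wedge_small //; have [cY|cY] := leqP (n - q) #|Y|.
  rewrite mu_wedge_large //; apply: bigmin_le_cond.
  rewrite cY card_ltn_ord YT properEcard sXY !andbT /=.
  exact: leq_trans cX cY.
rewrite mu_wedge_small //; apply: sub_bigmin => Z /and3P[pYZ -> ->].
by rewrite (sub_proper_trans sXY pYZ).
Qed.

End MuWedge.

Theorem proposition2 (R : realType) (L : pred R) (n N q : nat)
  (x : 'I_N -> 'I_n -> R) (alpha : 'I_N -> R) :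
  admissible_scale L ->
  (forall k i, L (x k i)) -> (forall k, L (alpha k)) ->
  (1 <= q <= n)%N ->
  (exists A' : {set 'I_n}, #|A'| = (n - q)%N /\ fB x alpha A' = 0) ->
  capacity L (mu_wedge q x alpha) /\ q_minitive q (mu_wedge q x alpha).
Proof.
move=> /admissible_scale01[L0 L1 L01] _ La qn [A [cA fA0]].
have alpha_ge0 k : 0 <= alpha k by case/andP: (L01 _ (La k)).
have alpha_le1 k : alpha k <= 1 by case/andP: (L01 _ (La k)).
split; last exact: mu_wedge_minitive.
split=> [X|||]; first exact: mu_wedge_in_scale.
- exact: mu_wedge0 qn cA fA0.
- exact: mu_wedgeT.
- exact: mu_wedge_monotone.
Qed.
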